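(* Let $P$ and $P^\star$ be quantifier-free formulas, with $P$ represented as a syntax tree, and let $\mathcal S$ be a set of pairwise disjoint subtrees of $P$ (repair sites). Let $[P_\bot,P_\top]=\mathrm{CreateBounds}(P,\mathcal S)$, and suppose $P_\bot\Rightarrow P^\star$ and $P^\star\Rightarrow P_\top$. Then there exists a function $\mathcal F$ assigning to each $s\in\mathcal S$ a quantifier-free formula $\mathcal F(s)$ such that the formula obtained from $P$ by replacing each $s\in\mathcal S$ with $\mathcal F(s)$ is logically equivalent to $P^\star$.
   Context: **Formulas.** Predicates are quantifier-free formulas over a common set of typed variables. The atomic predicates are interpreted in a fixed theory. $\varphi\Rightarrow\psi$ means that $\psi$ holds under every assignment of the variables satisfying $\varphi$. Logical equivalence means mutual implication. Replacement formulas $\mathcal F(s)$ may be any quantifier-free formulas built with $\wedge,\vee,\neg$ from atomic predicates over these variables. **Syntax trees.** A predicate is represented as a syntax tree: - leaves are atomic predicates; - each internal node is labeled $\wedge$ or $\vee$ (with at least two children), or $\neg$ (with exactly one child). Subtrees are disjoint if none is contained in another. For a node $x$, $\mathcal S[x]$ denotes the elements of $\mathcal S$ in the subtree rooted at $x$. **CreateBounds.** $\mathrm{CreateBounds}(x,\mathcal S)$ is defined recursively: 1. If $x\in\mathcal S$, it is $[\mathrm{false},\mathrm{true}]$. 2. Otherwise, if $x$ is atomic, it is $[x,x]$. 3. Otherwise, if $x$ is labeled $\Theta\in\{\wedge,\vee\}$ with children $c_i$, it is $[\Theta_i l_{c_i},\Theta_i u_{c_i}]$, where $[l_{c_i},u_{c_i}]=\mathrm{CreateBounds}(c_i,\mathcal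 S[c_i])$. 4. Otherwise, $x$ is $\neg c$, and it is $[\neg u_c,\neg l_c]$, where $[l_c,u_c]=\mathrm{CreateBounds}(c,\mathcal S[c])$. *)

From mathcomp Require Import all_boot.
Set Implicit Arguments. Unset Strict Implicit. Unset Printing Implicit Defensive.

Inductive form (A : Type) : Type :=
| FTrue | FFalse
| FAtom of A
| FAnd of seq (form A)
| FOr of seq (form A)
| FNot of form A.

Arguments FTrue {A}. Arguments FFalse {A}.

Section Forms.
Variables (A V : Type) (sem : A -> V -> bool).

(* Semantics under an assignment v : V of the (typed) variables;
   sem a v is the interpretation of the atom a in the fixed theory. *)
Fixpoint eval (v : V) (f : form A) : bool :=
  match f with
  | FTrue => true
  | FFalse => false
  | FAtom a => sem a v
  | FAnd l => (fix ev l := if l is g :: l' then eval v g && ev l' else true) l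
  | FOr l => (fix ev l := if l is g :: l' then eval v g || ev l' else false) l
  | FNot g => ~~ eval v g
  end.

Definition fimplies (phi psi : form A) : Prop :=
  forall v : V, eval v phi -> eval v psi.

Definition fequiv (phi psi : form A) : Prop :=
  fimplies phi psi /\ fimplies psi phi.
End Forms.

Section Trees.
Variable A : Type.

Fixpoint is_tree (f : form A) : bool :=
  match f with
  | FTrue | FFalse => false
  | FAtom _ => true
  | FAnd l | FOr l =>
      (1 < size l) &&
      (fix ev l := if l is g :: l' then is_tree g && ev l' else true) l
  | FNot g => is_tree g
  end.

(* Subtrees are identified by their positions (paths of child indices,
   0-based; the child of a not-node has index 0). *)
Fixpoint valid_pos (f : form A) (p : seq nat) {struct p} : bool :=
  match p with
  | [::] => true
  | i :: p' =>
      match f with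
      | FAnd l | FOr l =>
          (fix vl l i := match l with
                         | [::] => false
                         | c :: l' => if i is j.+1 then vl l' j else valid_pos c p'
                         end) l i
      | FNot c => (i == 0) && valid_pos c p'
      | _ => false
      end
  end.

Definition restrict (S : seq (seq nat)) (i : nat) : seq (seq nat) :=
  [seq behead p | p <- S & if p is j :: _ then j == i else false].

(* pairwise disjoint subtrees: no element is contained in another one *)
Definition disjoint_sites (S : seq (seq nat)) : Prop :=
  forall p q, p \in S -> q \in S -> p != q -> ~~ prefix p q.

Fixpoint create_bounds (x : form A) (S : seq (seq nat)) : form A * form A :=
  if [::] \in S then (FFalse, FTrue) else
  match x with
  | FAnd l =>
      let bs := (fix cb l i := match l with
                               | [::] => [::]
                               | c :: l' => create_bounds c (restrict S i) :: cb l' i.+1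
                               end) l 0 in
      (FAnd (map fst bs), FAnd (map snd bs))
  | FOr l =>
      let bs := (fix cb l i := match l with
                               | [::] => [::]
                               | c :: l' => create_bounds c (restrict S i) :: cb l' i.+1
                               end) l 0 in
      (FOr (map fst bs), FOr (map snd bs))
  | FNot c =>
      let b := create_bounds c (restrict S 0) in (FNot b.2, FNot b.1)
  | _ => (x, x)
  end.

Fixpoint replace_sites (x : form A) (S : seq (seq nat))
    (F : seq nat -> form A) : form A :=
  if [::] \in S then F [::] else
  match x with
  | FAnd l =>
      FAnd ((fix rl l i := match l with
                           | [::] => [::]
                           | c :: l' => replace_sites c (restrict S i) (fun p => F (i :: p))
                                        :: rl l' i.+1
                           end) l 0)
  | FOr l =>
      FOr ((fix rl l i := match l with
                          | [::] => [::]
                          | c :: l' => replace_sites c (restrict S i) (fun p => F (i :: p))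
                                       :: rl l' i.+1
                          end) l 0)
  | FNot c => FNot (replace_sites c (restrict S 0) (fun p => F (0 :: p)))
  | _ => x
  end.
End Trees.

(* Every formula [T] with [P_bot => T => P_top] is reached by some repair, by
   structural induction on [P].  At a site one replaces by [T] itself.  Below an
   n-ary node with connective [op] the target is split between the first child,
   with bounds [l, u], and the remaining children, with bounds [L, U]: each gets
   the clamped target [(T \/ l) /\ u], resp. [(T \/ L) /\ U].  These lie within the
   children's bounds because [l => u] and [L => U], and for ANY binary [op],
   [op ((T \/ l) /\ u) ((T \/ L) /\ U) = T] as soon as [op l L => T => op u U]
   (split on the value of [T]).  Negation swaps the two bounds. *)
From Stdlib Require Import FunctionalExtensionality.
From Stdlib Require List.
From mathcomp Require Import all_boot.

Set Implicit Arguments. Unset Strict Implicit. Unset Printing Implicit Defensive.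

Lemma andb_monotone a b c d : a ==> b -> c ==> d -> a && c ==> b && d.
Proof. by case: a; case: b; case: c; case: d. Qed.

Lemma orb_monotone a b c d : a ==> b -> c ==> d -> a || c ==> b || d.
Proof. by case: a; case: b; case: c; case: d. Qed.

Lemma clamp_op (op : bool -> bool -> bool) (l u L U t : bool) :
  l ==> u -> L ==> U -> (op l L ==> t) && (t ==> op u U) ->
  op ((t || l) && u) ((t || L) && U) = t.
Proof.
move=> /implyP lu /implyP LU; case: t => /=; first by rewrite !implybT => /= ->.
rewrite !implybF andbT => /negbTE <-.
by congr op; [case: l lu => // ->|case: L LU => // ->].
Qed.

Section Repair.
Variables (A V : Type) (sem : A -> V -> bool).
Implicit Types (x c T lo hi : form A) (l : seq (form A)) (S : seq (seq nat))
  (F : seq nat -> form A).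
Local Notation ev := (eval sem).

Definition form_ind_nested (P : form A -> Prop)
    (P_true : P FTrue) (P_false : P FFalse) (P_atom : forall a, P (FAtom a))
    (P_and : forall l, List.Forall P l -> P (FAnd l))
    (P_or : forall l, List.Forall P l -> P (FOr l))
    (P_not : forall c, P c -> P (FNot c)) : forall x, P x :=
  fix IH x := match x return P x with
  | FTrue => P_true
  | FFalse => P_false
  | FAtom a => P_atom a
  | FAnd l => P_and l ((fix all_IH l := match l return List.Forall P l with
      | [::] => List.Forall_nil P
      | c :: l' => List.Forall_cons c (IH c) (all_IH l') end) l)
  | FOr l => P_or l ((fix all_IH l := match l return List.Forall P l with
      | [::] => List.Forall_nil P
      | c :: l' => List.Forall_cons c (IH c) (all_IH l') end) l)
  | FNot c => P_not c (IH c)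
  end.

Definition child_bounds S : seq (form A) -> nat -> seq (form A * form A) :=
  fix cb l i := match l with
  | [::] => [::]
  | c :: l' => create_bounds c (restrict S i) :: cb l' i.+1
  end.

Definition replace_children S F : seq (form A) -> nat -> seq (form A) :=
  fix rc l i := match l with
  | [::] => [::]
  | c :: l' => replace_sites c (restrict S i) (fun p => F (i :: p)) :: rc l' i.+1
  end.

Lemma child_bounds_cons S c l i :
  child_bounds S (c :: l) i = create_bounds c (restrict S i) :: child_bounds S l i.+1.
Proof. by []. Qed.

Lemma replace_children_cons S F c l i :
  replace_children S F (c :: l) i =
  replace_sites c (restrict S i) (fun p => F (i :: p)) :: replace_children S F l i.+1.
Proof. by []. Qed.

Lemma create_bounds_root x S : [::] \in S -> create_bounds x S = (FFalse, FTrue).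
Proof. by case: x => * /=; rewrite ifT. Qed.

Lemma create_bounds_and S l : [::] \notin S ->
  create_bounds (FAnd l) S =
  (FAnd (map fst (child_bounds S l 0)), FAnd (map snd (child_bounds S l 0))).
Proof. by move=> HS; rewrite /= ifN. Qed.

Lemma create_bounds_or S l : [::] \notin S ->
  create_bounds (FOr l) S =
  (FOr (map fst (child_bounds S l 0)), FOr (map snd (child_bounds S l 0))).
Proof. by move=> HS; rewrite /= ifN. Qed.

Lemma create_bounds_not S c : [::] \notin S ->
  create_bounds (FNot c) S =
  (FNot (create_bounds c (restrict S 0)).2, FNot (create_bounds c (restrict S 0)).1).
Proof. by move=> HS; rewrite /= ifN. Qed.

Lemma replace_sites_root x S F : [::] \in S -> replace_sites x S F = F [::].
Proof. by case: x => * /=; rewrite ifT. Qed.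

Lemma replace_sites_and S F l : [::] \notin S ->
  replace_sites (FAnd l) S F = FAnd (replace_children S F l 0).
Proof. by move=> HS; rewrite /= ifN. Qed.

Lemma replace_sites_or S F l : [::] \notin S ->
  replace_sites (FOr l) S F = FOr (replace_children S F l 0).
Proof. by move=> HS; rewrite /= ifN. Qed.

Lemma replace_sites_not S F c : [::] \notin S ->
  replace_sites (FNot c) S F =
  FNot (replace_sites c (restrict S 0) (fun p => F (0 :: p))).
Proof. by move=> HS; rewrite /= ifN. Qed.

Lemma replace_children_ext S F F' l i :
  (forall k p, i <= k -> F (k :: p) = F' (k :: p)) ->
  replace_children S F l i = replace_children S F' l i.
Proof.
elim: l i => [|c l IHl] i // eqFF'; rewrite !replace_children_cons.
rewrite (IHl i.+1) => [|k p /ltnW]; last exact: eqFF'.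
by congr (_ :: _); congr replace_sites; apply: functional_extensionality => p; apply: eqFF'.
Qed.

Definition glue i F F' p : form A :=
  if p is j :: p' then (if j == i then F p' else F' p) else F' p.

Lemma replace_children_glue S F F' c l i :
  replace_children S (glue i F F') (c :: l) i =
  replace_sites c (restrict S i) F :: replace_children S F' l i.+1.
Proof.
rewrite replace_children_cons (@replace_children_ext _ _ F').
  by congr (_ :: _); congr replace_sites; apply: functional_extensionality => p /=; rewrite eqxx.
by move=> k p; rewrite /glue ltn_neqAle eq_sym => /andP[/negbTE ->].
Qed.

Definition between lo T hi := forall v, (ev v lo ==> ev v T) && (ev v T ==> ev v hi).

Definition repairs x S T := exists F, forall v, ev v (replace_sites x S F) = ev v T.

Definition clamp lo hi T := FAnd [:: FOr [:: T; lo]; hi].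

Lemma eval_clamp v lo hi T : ev v (clamp lo hi T) = (ev v T || ev v lo) && ev v hi.
Proof. by rewrite /= orbF andbT. Qed.

Lemma clamp_between lo hi T :
  (forall v, ev v lo ==> ev v hi) -> between lo (clamp lo hi T) hi.
Proof.
move=> lo_hi v; rewrite eval_clamp; move: (lo_hi v).
by case: (ev v lo); case: (ev v hi); case: (ev v T).
Qed.

Lemma between_same x T v : between x T x -> ev v T = ev v x.
Proof. by move/(_ v); case: (ev v x); case: (ev v T). Qed.

Lemma between_not lo T hi : between (FNot hi) T (FNot lo) -> between lo (FNot T) hi.
Proof. by move=> Hb v; move: (Hb v) => /=; case: (ev v lo); case: (ev v hi); case: (ev v T). Qed.

Lemma eval_and_cons v c l : ev v (FAnd (c :: l)) = ev v c && ev v (FAnd l).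
Proof. by []. Qed.

Lemma eval_or_cons v c l : ev v (FOr (c :: l)) = ev v c || ev v (FOr l).
Proof. by []. Qed.

Section Connective.
Variables (node : seq (form A) -> form A) (op : bool -> bool -> bool).
Hypothesis eval_node_cons : forall v c l, ev v (node (c :: l)) = op (ev v c) (ev v (node l)).
Hypothesis op_monotone :
  forall a a' b b' : bool, a ==> a' -> b ==> b' -> op a b ==> op a' b'.

Lemma node_bounds_le S l i v :
  List.Forall (fun c => forall S v,
    ev v (create_bounds c S).1 ==> ev v (create_bounds c S).2) l ->
  ev v (node (map fst (child_bounds S l i))) ==> ev v (node (map snd (child_bounds S l i))).
Proof.
elim: l i => [|c l IHl] i; first by rewrite implybb.
move/List.Forall_cons_iff=> [c_le l_le].
by rewrite child_bounds_cons /= !eval_node_cons; apply: op_monotone; [apply: c_le|apply: IHl].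
Qed.

Hypothesis bounds_le : forall c S v,
  ev v (create_bounds c S).1 ==> ev v (create_bounds c S).2.

Lemma node_repair S l i T :
  List.Forall (fun c => forall S T,
    between (create_bounds c S).1 T (create_bounds c S).2 -> repairs c S T) l ->
  between (node (map fst (child_bounds S l i))) T (node (map snd (child_bounds S l i))) ->
  exists F, forall v, ev v (node (replace_children S F l i)) = ev v T.
Proof.
elim: l i T => [|c l IHl] i T.
  by move=> _ Hb; exists (fun=> T) => v; rewrite (between_same v Hb).
move/List.Forall_cons_iff=> [c_repairs l_repairs].
rewrite child_bounds_cons /= => Hb.
set L := node (map fst (child_bounds S l i.+1)).
set U := node (map snd (child_bounds S l i.+1)).
have L_U v : ev v L ==> ev v U.
  by apply: node_bounds_le; apply/List.Forall_forall => d _; apply: bounds_le.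
have [Fc eqFc] := c_repairs _ _ (clamp_between T (bounds_le c (restrict S i))).
have [Fl eqFl] := IHl i.+1 _ l_repairs (clamp_between T L_U).
exists (glue i Fc Fl) => v.
rewrite -replace_children_cons replace_children_glue eval_node_cons eqFc eqFl !eval_clamp.
apply: clamp_op; [exact: bounds_le|exact: L_U|].
by move: (Hb v); rewrite !eval_node_cons.
Qed.

End Connective.

Lemma create_bounds_le x S v :
  ev v (create_bounds x S).1 ==> ev v (create_bounds x S).2.
Proof.
elim/form_ind_nested: x S v => [||a|l IHl|l IHl|c IHc] S v;
  (have [HS|HS] := boolP ([::] \in S); first by rewrite create_bounds_root).
1-3: by rewrite /= (negbTE HS) /= ?implybb.
- by rewrite create_bounds_and //; exact: (node_bounds_le eval_and_cons andb_monotone).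
- by rewrite create_bounds_or //; exact: (node_bounds_le eval_or_cons orb_monotone).
- by rewrite create_bounds_not //= implybNN.
Qed.

Lemma repairs_between x S T :
  between (create_bounds x S).1 T (create_bounds x S).2 -> repairs x S T.
Proof.
elim/form_ind_nested: x S T => [||a|l IHl|l IHl|c IHc] S T Hb;
  (have [HS|HS] := boolP ([::] \in S);
   first by exists (fun=> T) => v; rewrite replace_sites_root).
1-3: move: Hb; rewrite /= (negbTE HS) /= => Hb;
  by exists (fun=> T) => v; rewrite /= (negbTE HS) (between_same v Hb).
- rewrite create_bounds_and // in Hb.
  have [F eqF] := node_repair eval_and_cons andb_monotone create_bounds_le IHl Hb.
  by exists F => v; rewrite replace_sites_and.
- rewrite create_bounds_or // in Hb.
  have [F eqF] := node_repair eval_or_cons orb_monotone create_bounds_le IHl Hb.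
  by exists F => v; rewrite replace_sites_or.
- rewrite create_bounds_not // in Hb.
  have [F eqF] := IHc _ _ (between_not Hb).
  by exists (fun p => F (behead p)) => v; rewrite replace_sites_not //= eqF negbK.
Qed.

End Repair.

Theorem mainTheorem3 (A V : Type) (sem : A -> V -> bool)
    (P Pstar : form A) (S : seq (seq nat)) :
  is_tree P ->
  (forall s, s \in S -> valid_pos P s) ->
  disjoint_sites S ->
  fimplies sem (create_bounds P S).1 Pstar ->
  fimplies sem Pstar (create_bounds P S).2 ->
  exists F : seq nat -> form A,
    fequiv sem (replace_sites P S F) Pstar.
Proof.
move=> _ _ _ lo_Pstar Pstar_hi.
have [F eqF] : repairs sem P S Pstar.
  apply: repairs_between => v; apply/andP.
  by split; apply/implyP; [apply: lo_Pstar|apply: Pstar_hi].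
by exists F; split=> v; rewrite eqF.
Qed.
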